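(* Let $\{\mathbb{P}_\theta\}$ be a parametric model with log-likelihood $\ell_\theta$, true parameter $\theta_0$, and parameter split into two blocks $\theta=(\theta_1,\theta_2)$; let $G$ be a compact group acting on the sample space with Haar probability measure $\mathbb{Q}$, and suppose the invariant parameter set $\Theta_G$ is $\{\theta:\theta_2=0\}$. Let $I(\theta)=\mathbb{E}_\theta\nabla\ell_\theta\nabla\ell_\theta^\top$ be the Fisher information with blocks $I_{11},I_{12},I_{21},I_{22}$ corresponding to $(\theta_1,\theta_2)$, assumed invertible, and let $\bar I(\theta)=\mathrm{Cov}_\theta\big(\mathbb{E}_{g\sim\mathbb{Q}}\nabla\ell_\theta(gX)\big)$, assumed invertible. Suppose the augmented MLE (aMLE) has asymptotic covariance $I(\theta_0)^{-1}\bar I(\theta_0)I(\theta_0)^{-1}$ and the constrained MLE (cMLE) has asymptotic covariance $I_{11}(\theta_0)^{-1}$ for estimating $\theta_1$. Define $$M_\theta=\begin{bmatrix}I_{11}(\theta)^{-1}&(I(\theta)^{-1})_{1\cdot}\\(I(\theta)^{-1})_{\cdot1}&\bar I(\theta)^{-1}\end{bmatrix},$$ where $(I^{-1})_{1\cdot}$ is the submatrix of $I^{-1}$ consisting of the rows indexed by the coordinates of $\theta_1$ and $(I^{-1})_{\cdot1}$ its transpose (the corresponding columns). Then the aMLE is asymptotically more efficient than the cMLE in estimating $\theta_1$, i.e. $[I(\theta_0)^{-1}\bar I(\theta_0)I(\theta_0)^{-1}]_{11}\preceq I_{11}(\theta_0)^{-1}$, if and only if $M_{\theta_0}$ is positive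 semidefinite.
   Context: The augmented MLE maximizes $\sum_i\int_G\ell_\theta(gX_i)\,d\mathbb{Q}(g)$ over $\theta$; the constrained MLE maximizes $\sum_i\ell_\theta(X_i)$ over $\theta\in\Theta_G$. $[A]_{11}$ denotes the top-left block of $A$ corresponding to $\theta_1$; $\preceq$ is the Loewner order. *)

From mathcomp Require Import all_boot all_order all_algebra.
Set Implicit Arguments. Unset Strict Implicit. Unset Printing Implicit Defensive.
Import Order.TTheory GRing.Theory Num.Theory.
Local Open Scope ring_scope.

Definition psd (R : realFieldType) (n : nat) (A : 'M[R]_n) : Prop :=
  A^T = A /\ forall v : 'cV[R]_n, 0 <= (v^T *m A *m v) 0 0.

Definition loewner_le (R : realFieldType) (n : nat) (A B : 'M[R]_n) : Prop :=
  psd (B - A).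

(* Block notation for a matrix indexed by (theta_1, theta_2), dims p and q. *)
Definition blk11 (R : realFieldType) (p q : nat) (A : 'M[R]_(p + q)) : 'M[R]_p :=
  ulsubmx A.

Definition Mtheta (R : realFieldType) (p q : nat) (I Ibar : 'M[R]_(p + q))
  : 'M[R]_(p + (p + q)) :=
  block_mx (invmx (blk11 I))      (usubmx (invmx I))
           (lsubmx (invmx I))     (invmx Ibar).

From mathcomp Require Import all_boot all_order all_algebra.
From Stdlib Require Import Setoid.
Import Order.TTheory GRing.Theory Num.Theory.
Set Implicit Arguments. Unset Strict Implicit. Unset Printing Implicit Defensive.
Local Open Scope ring_scope.

(** With J := I^-1 and U its first p rows, the first p columns of the
  symmetric J are U^T, so [J Ibar J]_11 = U Ibar U^T and
  M_theta = [[I_11^-1, U], [U^T, Ibar^-1]].  The Schur complement of the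
  positive definite corner Ibar^-1 in M_theta is I_11^-1 - U Ibar U^T, and a
  symmetric block matrix with a positive definite corner is positive
  semidefinite exactly when that Schur complement is. *)

Section PsdCongruence.

Variable R : realFieldType.

Lemma psd_mulmx m n (A : 'M[R]_m) (P : 'M[R]_(m, n)) :
  psd A -> psd (P^T *m A *m P).
Proof.
move=> [sA nnA]; split; first by rewrite !trmx_mul trmxK sA mulmxA.
by move=> v; rewrite !mulmxA -trmx_mul -mulmxA.
Qed.

Lemma psd_congr n (A P : 'M[R]_n) :
  P \in unitmx -> psd (P^T *m A *m P) <-> psd A.
Proof.
move=> uP; split=> [/(psd_mulmx (invmx P))|]; last exact: psd_mulmx.
by rewrite !mulmxA -trmx_mul mulmxV // trmx1 mul1mx -mulmxA mulmxV // mulmx1.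
Qed.

Lemma psd_invmx n (A : 'M[R]_n) : psd A -> psd (invmx A).
Proof.
case: (boolP (A \in unitmx)) => [uA psdA|nuA]; last by rewrite invmx_out.
have /(psd_mulmx (invmx A)) := psdA; case: psdA => sA _.
by rewrite trmx_inv sA -mulmxA mulmxV // mulmx1.
Qed.

Lemma psd_block_diag m n (A : 'M[R]_m) (C : 'M[R]_n) :
  psd (block_mx A 0 0 C) <-> psd A /\ psd C.
Proof.
split=> [psdM|[[sA nnA] [sC nnC]]].
  split; [move/(psd_mulmx (col_mx 1%:M 0)): psdM
         | move/(psd_mulmx (col_mx 0 1%:M)): psdM];
  by rewrite tr_col_mx trmx1 trmx0 mul_row_block mul_row_col
    !(mul1mx, mulmx1, mul0mx, mulmx0, addr0, add0r).
split; first by rewrite tr_block_mx sA sC !trmx0.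
move=> v; rewrite -(vsubmxK v) tr_col_mx mul_row_block mul_row_col.
by rewrite !(mulmx0, mul0mx, addr0, add0r) mxE addr_ge0.
Qed.

End PsdCongruence.

Section SchurComplement.

Variables (R : comUnitRingType) (m n : nat).
Variables (A : 'M[R]_m) (B : 'M[R]_(m, n)) (C : 'M[R]_n).
Hypotheses (sC : C^T = C) (uC : C \in unitmx).

Definition schur_elim_mx : 'M[R]_(m + n) :=
  block_mx 1%:M 0 (invmx C *m B^T) 1%:M.

Lemma schur_elim_mx_unit : schur_elim_mx \in unitmx.
Proof. by rewrite unitmxE det_lblock !det1 mulr1 unitr1. Qed.

Lemma block_mx_schur_factor :
  block_mx A B B^T C =
  schur_elim_mx^T *m block_mx (A - B *m invmx C *m B^T) 0 0 C *m schur_elim_mx.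
Proof.
have sCi : (invmx C)^T = invmx C by rewrite trmx_inv sC.
rewrite tr_block_mx trmx1 trmx0 trmx_mul trmxK sCi !mulmx_block.
rewrite trmx1 !(mulmx0, mul0mx, mulmx1, mul1mx, addr0, add0r).
by rewrite !mulmxKV // mulKVmx // mulmxA subrK.
Qed.

End SchurComplement.

Lemma psd_block_schur (R : realFieldType) m n
    (A : 'M[R]_m) (B : 'M[R]_(m, n)) (C : 'M[R]_n) :
  psd C -> C \in unitmx ->
  psd (block_mx A B B^T C) <-> psd (A - B *m invmx C *m B^T).
Proof.
move=> psdC uC; have [sC _] := psdC.
rewrite block_mx_schur_factor // psd_congr ?schur_elim_mx_unit // psd_block_diag.
by split=> [[]|].
Qed.

Lemma ulsubmx_mul3 (R : pzSemiRingType) m1 m2 k n1 n2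
    (A : 'M[R]_(m1 + m2, k)) (B : 'M[R]_k) (C : 'M[R]_(k, n1 + n2)) :
  ulsubmx (A *m B *m C) = usubmx A *m B *m lsubmx C.
Proof. by rewrite /ulsubmx -!mul_usub_mx -mulmx_lsub. Qed.

Theorem proposition4p9 (R : realFieldType) (p q : nat)
    (I Ibar : 'M[R]_(p + q))
    (* Fisher information at theta_0: E[score score^T], symmetric PSD, invertible *)
    (hI : psd I) (hIinv : I \in unitmx)
    (* Ibar at theta_0: covariance of the orbit-averaged score, PSD, invertible *)
    (hIbar : psd Ibar) (hIbarinv : Ibar \in unitmx) :
  loewner_le (blk11 (invmx I *m Ibar *m invmx I)) (invmx (blk11 I))
  <-> psd (Mtheta I Ibar).
Proof.
(* [hIinv] is not needed: only the symmetry of [invmx I] is used, and it also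
   holds for the junk value [invmx I = I]. *)
have [sI _] := hI.
have lsubJ : lsubmx (invmx I) = (usubmx (invmx I))^T.
  by rewrite trmx_usub trmx_inv sI.
rewrite /loewner_le /Mtheta /blk11 ulsubmx_mul3 lsubJ.
rewrite psd_block_schur ?invmxK //; first exact: psd_invmx.
by rewrite unitmx_inv.
Qed.
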